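(* Let $G$ be a $*$-graph in which every vertex has valency $4$ or $6$, and let $G'$ be an expansion of $G$. If $G'$ contains a Vassiliev obstruct, then $G$ contains a Vassiliev obstruct.
   Context: Graphs are finite and may have loops and multiple edges; each edge consists of two half-edges. A $*$-graph is a graph together with, for each vertex $a$ of valency $n$, an unoriented cyclic order $X_a$ of the half-edges at $a$, i.e. a bijection $X_a$ from the half-edges at $a$ to the vertices of the cycle graph $C_n$ (a cyclic order up to rotation and reversal). An $X$-graph is a $4$-regular graph with, at each vertex, a partition of its half-edges into two pairs of opposite half-edges; this is the same as a $*$-structure at each $4$-valent vertex (opposite = non-adjacent in the cyclic order). Expansion of a $6$-valent vertex $v$: label its half-edges $h_1,\dots,h_6$ so that $X_v$ is the cyclic order $(h_1,\dots,h_6)$; replace $v$ by a triangle on new vertices $p_1,p_2,p_3$, attach $h_1,h_2$ to $p_1$, $h_3,h_4$ to $p_2$, $h_5,h_6$ to $p_3$, with $X$-structures: at $p_1$, $h_1$ opposite the half-edge of $p_1p_2$ and $h_2$ opposite that of $p_1p_3$; at $p_2$, $h_3$ opposite that of $p_2p_3$ and $h_4$ opposite that of $p_2p_1$; at $p_3$, $h_5$ opposite that of $p_3p_1$ and $h_6$ opposite that of $p_3p_2$. An expansion of $G$ replaces every $6$-valent vertex in this way (choices of labeling made independently), the $4$-valent vertices keeping their structure. A cycle is a closed walk using no edge more than once (vertices may repeat). For edge-disjoint cycles $A,B$, a crossing is an occurrence of a common vertex $a$ where $A$ passes via half-edges $A_1,A_2$ and $B$ via $B_1,B_2$ with $X_a(A_1),X_a(B_1),X_a(A_2),X_a(B_2)$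 alternating in $C_n$ (for a $4$-valent vertex: each cycle passes straight through via a pair of opposite half-edges); crossings are counted with multiplicity over all such pairs of passages. A Vassiliev obstruct is a pair of edge-disjoint cycles with exactly one crossing. *)

From mathcomp Require Import all_boot.
Set Implicit Arguments. Unset Strict Implicit. Unset Printing Implicit Defensive.

(* A graph with half-edges: [vert h] is the vertex carrying half-edge [h],
   [opp h] is the other half of the edge containing [h].  [xpos h] is the
   position X_a(h) in the cycle graph C_n (vertices 0..n-1) of the
   *-structure at a = vert h. *)
Record sgraph := SGraph {
  sV : finType;
  sH : finType;
  vert : sH -> sV;
  opp : sH -> sH;
  xpos : sH -> nat }.

Section Graphs.
Variable G : sgraph.

Definition deg (v : sV G) : nat := #|[set h | vert h == v]|.

(* opp is a fixed-point-free involution (edges = pairs of half-edges), and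
   X_a is a bijection from the half-edges at a onto the vertices 0..deg a - 1
   of C_(deg a). *)
Definition wf_star_graph : Prop :=
  (forall h : sH G, opp (opp h) = h /\ opp h <> h) /\
  (forall h : sH G, xpos h < deg (vert h)) /\
  (forall h1 h2 : sH G, vert h1 = vert h2 -> xpos h1 = xpos h2 -> h1 = h2).

(* A closed walk traversing the edges h_1, ..., h_k: edge i is entered at
   half-edge h_i and left at opp h_i; no edge used twice. *)
Definition is_cycle (c : seq (sH G)) : bool :=
  [&& 0 < size c, uniq (c ++ map (@opp G) c)
    & cycle (fun h h' => vert (opp h) == vert h') c].

Definition passages (c : seq (sH G)) : seq (sH G * sH G) :=
  zip (map (@opp G) c) (rot 1 c).

Definition edge_disjoint (A B : seq (sH G)) : bool :=
  ~~ has (mem (B ++ map (@opp G) B)) (A ++ map (@opp G) A).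

Definition strictly_between (a c x : nat) : bool := (minn a c < x < maxn a c).

(* positions a, b, c, d of C_n occur alternately around the cycle:
   they are distinct and b, d lie in different arcs cut out by a and c *)
Definition alternating (a b c d : nat) : bool :=
  [&& uniq [:: a; b; c; d] &
      strictly_between a c b != strictly_between a c d].

Definition is_crossing (p q : sH G * sH G) : bool :=
  (vert p.1 == vert q.1) &&
  alternating (xpos p.1) (xpos q.1) (xpos p.2) (xpos q.2).

Definition crossings (A B : seq (sH G)) : nat :=
  count (fun pq => is_crossing pq.1 pq.2)
        [seq (p, q) | p <- passages A, q <- passages B].

Definition vassiliev_obstruct (A B : seq (sH G)) : Prop :=
  [/\ is_cycle A, is_cycle B, edge_disjoint A B & crossings A B = 1].

Definition has_vassiliev_obstruct : Prop :=
  exists A B, vassiliev_obstruct A B.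

(* A labeling choice for the expansion: at each 6-valent vertex v the labels
   lab h (in 0..5, meaning h = h_(lab h + 1)) list the half-edges at v in the
   cyclic order X_v, up to rotation and reversal. *)
Definition expansion_labeling (lab : sH G -> nat) : Prop :=
  forall v : sV G, deg v = 6 ->
  exists (r : nat) (s : bool), forall h : sH G, vert h = v ->
    lab h = (if s then (r + xpos h) %% 6 else (r + 6 - xpos h) %% 6).

End Graphs.

Section Expansion.
Variables (G : sgraph) (lab : sH G -> nat).

Definition V4 := {v : sV G | deg v != 6}.
Definition V6 := {v : sV G | deg v == 6}.
(* vertices of the expansion: non-6-valent vertices of G, and p_1,p_2,p_3
   (indices 0,1,2) for each 6-valent vertex *)
Definition exV : finType := (V4 + V6 * 'I_3)%type.
(* half-edges of the expansion: those of G, plus for each 6-valent v and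
   i : 'I_3 two triangle half-edges at p_i: (v,i,true) on the edge p_i p_(i+1)
   and (v,i,false) on the edge p_i p_(i-1) *)
Definition exH : finType := (sH G + V6 * 'I_3 * bool)%type.

Definition blk (h : sH G) : 'I_3 := inord (lab h %/ 2).

Definition ex_vert_old (h : sH G) : exV :=
  match (deg (vert h) == 6) as b return (deg (vert h) == 6) = b -> exV with
  | true => fun e => inr (exist (fun v => deg v == 6) (vert h) e, blk h)
  | false => fun e => inl (exist (fun v => deg v != 6) (vert h) (negbT e))
  end erefl.

Definition ex_vert (x : exH) : exV :=
  match x with
  | inl h => ex_vert_old h
  | inr (vi, _) => inr vi
  end.

Definition ex_opp (x : exH) : exH :=
  match x with
  | inl h => inl (opp h)
  | inr (v, i, true) => inr (v, ordS i, false)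
  | inr (v, i, false) => inr (v, ord_pred i, true)
  end.

(* X-structure at p_i: cyclic order (h_(2i+1), h_(2i+2), [p_i p_(i+1)],
   [p_i p_(i-1)]), so that h_(2i+1) is opposite the half-edge of p_i p_(i+1)
   and h_(2i+2) opposite the half-edge of p_i p_(i-1). *)
Definition ex_xpos (x : exH) : nat :=
  match x with
  | inl h => if deg (vert h) == 6 then lab h %% 2 else xpos h
  | inr (_, _, b) => if b then 2 else 3
  end.

Definition expand : sgraph := @SGraph exV exH ex_vert ex_opp ex_xpos.

End Expansion.

From mathcomp Require Import all_boot zify.
Set Implicit Arguments. Unset Strict Implicit. Unset Printing Implicit Defensive.

(* Contract each triangle of the expansion back to its 6-valent vertex.  A
   cycle of G' through at least one old edge, once its triangle edges are
   deleted, becomes a cycle of G; it splits into pieces (an old edge followed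
   by a run of triangle edges), and the pieces correspond to the passages of
   the contracted cycle.  For two pieces through the same expanded vertex, the
   number of crossings inside the triangle exceeds the crossing number of the
   two contracted passages by an even amount: this is a finite check over all
   pairs of edge-disjoint walks through a triangle, the alternation of
   positions being invariant under the rotations and reflections that relate
   labels to positions.  Summing over pairs of pieces, the contracted cycles
   cross an odd number of times, at most once.  A cycle of triangle edges only
   crosses nothing, because triangle half-edges sit at the adjacent positions
   2 and 3 of their vertex. *)

Definition even_excess (m n : nat) : bool := (m <= n) && ~~ odd (n - m).

Lemma even_excessP m n : reflect (exists k, n = m + k.*2) (even_excess m n).
Proof.
apply: (iffP andP) => [[le_mn ev]|[k ->]].
  by exists (n - m)./2; rewrite even_halfK // subnKC.
by rewrite leq_addr addKn odd_double.
Qed.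

Lemma even_excessD m1 n1 m2 n2 :
  even_excess m1 n1 -> even_excess m2 n2 -> even_excess (m1 + m2) (n1 + n2).
Proof.
move=> /even_excessP[k1 ->] /even_excessP[k2 ->]; apply/even_excessP.
by exists (k1 + k2); rewrite doubleD; lia.
Qed.

Lemma even_excess_sum (I : eqType) (r : seq I) (f g : I -> nat) :
  (forall i, i \in r -> even_excess (f i) (g i)) ->
  even_excess (\sum_(i <- r) f i) (\sum_(i <- r) g i).
Proof.
elim: r => [|i r IHr] fg; first by rewrite !big_nil.
rewrite !big_cons even_excessD ?fg ?mem_head // IHr // => j rj.
by rewrite fg // inE rj orbT.
Qed.

Lemma even_excess1 m : even_excess m 1 -> m = 1.
Proof. by case/even_excessP => k; lia. Qed.

Lemma drop_zip (S T : Type) k (s : seq S) (t : seq T) :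
  drop k (zip s t) = zip (drop k s) (drop k t).
Proof. by elim: k s t => [|k IHk] [|x s] [|y t] //=; case: (drop k _). Qed.

Lemma take_zip (S T : Type) k (s : seq S) (t : seq T) :
  take k (zip s t) = zip (take k s) (take k t).
Proof. by elim: k s t => [|k IHk] [|x s] [|y t] //=; rewrite IHk. Qed.

Lemma rot_zip (S T : Type) k (s : seq S) (t : seq T) :
  size s = size t -> rot k (zip s t) = zip (rot k s) (rot k t).
Proof. by move=> eq_st; rewrite /rot zip_cat ?size_drop ?eq_st // drop_zip take_zip. Qed.

Lemma mem_zip (S T : eqType) (s : seq S) (t : seq T) p :
  p \in zip s t -> (p.1 \in s) && (p.2 \in t).
Proof.
elim: s t => [|x s IHs] [|y t] //=; rewrite inE => /orP[/eqP -> | /IHs /andP[ps pt]].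
  by rewrite /= eqxx mem_head.
by rewrite ps inE pt !orbT.
Qed.

Section Walks.
Variable K : sgraph.
Implicit Types (y z : sH K) (s A B : seq (sH K)).

Definition edge_halves s : seq (sH K) := s ++ map (@opp K) s.

Lemma edge_halves_cat_uniq A B :
  uniq (edge_halves (A ++ B)) -> uniq (edge_halves A) && uniq (edge_halves B).
Proof.
have reorder : perm_eq (A ++ B ++ map (@opp K) A ++ map (@opp K) B)
                       ((A ++ map (@opp K) A) ++ B ++ map (@opp K) B).
  by rewrite catA perm_catACA.
by rewrite /edge_halves map_cat -catA (perm_uniq reorder) cat_uniq => /and3P[-> _ ->].
Qed.

Definition walk_passages y s z : seq (sH K * sH K) :=
  zip (opp y :: map (@opp K) s) (s ++ [:: z]).
Arguments walk_passages : simpl never.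

Lemma walk_passages_cons y x s z :
  walk_passages y (x :: s) z = (opp y, x) :: walk_passages x s z.
Proof. by []. Qed.

Lemma walk_passages_cat y s1 w s2 z :
  walk_passages y (s1 ++ w :: s2) z = walk_passages y s1 w ++ walk_passages w s2 z.
Proof. by elim: s1 y => [|x s1 IHs] y //=; rewrite !walk_passages_cons IHs. Qed.

Lemma passages_cons y s : passages (y :: s) = walk_passages y s y.
Proof. by rewrite /passages /walk_passages /= rot1_cons cats1. Qed.

Lemma path_walk_passages y s z :
  path (fun h h' => vert (opp h) == vert h') y (s ++ [:: z]) =
  all (fun p => vert p.1 == vert p.2) (walk_passages y s z).
Proof.
by elim: s y => [|x s IHs] y; rewrite ?walk_passages_cons /= ?IHs ?andbT.
Qed.

Lemma cycle_passages y s :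
  cycle (fun h h' => vert (opp h) == vert h') (y :: s) =
  all (fun p => vert p.1 == vert p.2) (passages (y :: s)).
Proof. by rewrite /= -cats1 passages_cons path_walk_passages. Qed.

Lemma edge_halves_opp_neq A x y : uniq (edge_halves A) -> x \in A -> y \in A -> opp x != y.
Proof.
move=> uniqA xA yA; apply/eqP => opp_xy; move: uniqA; rewrite cat_uniq => /and3P[_ /hasP[]].
by exists (opp x); rewrite ?map_f ?opp_xy.
Qed.

Lemma edge_disjoint_neq A B x y :
  edge_disjoint A B -> x \in edge_halves A -> y \in edge_halves B -> x != y.
Proof.
move=> dAB xA yB; apply: contraNneq dAB => eq_xy.
by apply/hasP; exists x => //; rewrite eq_xy; exact: yB.
Qed.

Lemma mem_passages p A : p \in passages A -> (p.1 \in map (@opp K) A) && (p.2 \in A).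
Proof. by move/mem_zip; rewrite mem_rot. Qed.

Lemma crossingsE A B :
  crossings A B = \sum_(p <- passages A) \sum_(q <- passages B) is_crossing p q.
Proof. by rewrite /crossings -sumn_count sumnE big_map big_allpairs. Qed.

Lemma passages_rot k A : passages (rot k A) = rot k (passages A).
Proof. by rewrite /passages map_rot rot_rot rot_zip // size_map size_rot. Qed.

Lemma is_cycle_rot k A : is_cycle (rot k A) = is_cycle A.
Proof.
rewrite /is_cycle size_rot rot_cycle map_rot; congr [&& _, _ & _].
by apply: perm_uniq; apply: perm_cat; rewrite perm_rot.
Qed.

Lemma edge_disjoint_rot k l A B : edge_disjoint (rot k A) (rot l B) = edge_disjoint A B.
Proof.
rewrite /edge_disjoint !map_rot; congr (~~ _).
have rotE n (s : seq (sH K)) : rot n s ++ rot n (map (@opp K) s) =i s ++ map (@opp K) s.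
  by move=> x; rewrite (mem_cat x (rot n s)) !mem_rot -mem_cat.
by rewrite (eq_has_r (rotE k A)); apply: eq_has => x; apply: rotE.
Qed.

Lemma crossings_rot k l A B : crossings (rot k A) (rot l B) = crossings A B.
Proof.
have perm_rot_eq (T : eqType) n (s : seq T) : perm_eq (rot n s) s by rewrite perm_rot.
rewrite !crossingsE !passages_rot (perm_big _ (perm_rot_eq _ k _)).
by apply: eq_bigr => p _; rewrite (perm_big _ (perm_rot_eq _ l _)).
Qed.

Lemma vassiliev_obstruct_rot k l A B :
  vassiliev_obstruct A B -> vassiliev_obstruct (rot k A) (rot l B).
Proof.
by case=> cA cB dAB cr; split; rewrite ?is_cycle_rot ?edge_disjoint_rot ?crossings_rot.
Qed.

End Walks.

(* The neighbourhood of one expanded 6-valent vertex, with the old half-edges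
   represented by their labels 0..5. *)
Definition tri_half := ('I_3 * bool)%type.
Definition local_half := (nat + tri_half)%type.

Definition tri_opp (t : tri_half) : tri_half :=
  let: (i, b) := t in if b then (ordS i, false) else (ord_pred i, true).
Definition local_block (x : local_half) : nat :=
  match x with inl a => a %/ 2 | inr t => t.1 end.
Definition local_xpos (x : local_half) : nat :=
  match x with inl a => a %% 2 | inr t => if t.2 then 2 else 3 end.

Definition local_passages (a : nat) (T : seq tri_half) (a' : nat) :=
  zip (inl a :: map (inr \o tri_opp) T) (map inr T ++ [:: inl a']).
Definition local_crossing (p q : local_half * local_half) : bool :=
  (local_block p.1 == local_block q.1) &&
  alternating (local_xpos p.1) (local_xpos q.1) (local_xpos p.2) (local_xpos q.2).

Definition local_walk := (nat * seq tri_half * nat)%type.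
Definition local_walk_ok (P : local_walk) : bool :=
  let: (a, T, a') := P in
  all (fun p => local_block p.1 == local_block p.2) (local_passages a T a') &&
  uniq (T ++ map tri_opp T).
Definition local_crossings (P Q : local_walk) : nat :=
  let: (a, T, a') := P in let: (b, U, b') := Q in
  count (fun pq => local_crossing pq.1 pq.2)
    [seq (p, q) | p <- local_passages a T a', q <- local_passages b U b'].

Definition local_disjoint (P Q : local_walk) : bool :=
  let: (a, T, a') := P in let: (b, U, b') := Q in
  uniq [:: a; a'; b; b'] && ~~ has (mem (U ++ map tri_opp U)) T.

Definition local_parity (P Q : local_walk) : bool :=
  let: (a, T, a') := P in let: (b, U, b') := Q in
  even_excess (alternating a b a' b') (local_crossings P Q).

Definition tri_halves : seq tri_half :=
  [seq (i, b) | i <- [:: Ordinal (isT : 0 < 3); Ordinal (isT : 1 < 3); Ordinal (isT : 2 < 3)],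
                b <- [:: true; false]].
Arguments tri_halves : simpl never.

Fixpoint short_tri_seqs (n : nat) : seq (seq tri_half) :=
  [::] :: if n is n'.+1 then [seq t :: T | t <- tri_halves, T <- short_tri_seqs n'] else [::].

Definition local_walks : seq local_walk :=
  [seq P <- flatten [seq [seq (a, T, a') | T <- short_tri_seqs 3, a' <- iota 0 6]
                    | a <- iota 0 6] | local_walk_ok P].

Lemma local_parity_check :
  all (fun P => all (fun Q => local_disjoint P Q ==> local_parity P Q) local_walks) local_walks.
Proof. by vm_compute. Qed.

Lemma mem_tri_halves t : t \in tri_halves.
Proof. by case: t => -[[|[|[|i]]] lt_i3] [] //. Qed.

Lemma mem_short_tri_seqs n T : size T <= n -> T \in short_tri_seqs n.
Proof.
elim: n T => [|n IHn] [|t T] // le_Tn.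
have -> : short_tri_seqs n.+1 = [::] :: [seq t :: T | t <- tri_halves, T <- short_tri_seqs n].
  by [].
by rewrite in_cons (allpairs_f (fun t T => t :: T)) ?orbT ?mem_tri_halves ?IHn.
Qed.

Lemma local_walk_ok_size a T a' : local_walk_ok (a, T, a') -> size T <= 3.
Proof.
case/andP=> _ /card_uniqP; rewrite size_cat size_map addnn => card_T.
by rewrite -(leq_double _ 3) -card_T (leq_trans (max_card _)) // card_prod card_ord card_bool.
Qed.

Lemma local_parityP P Q :
  P.1.1 < 6 -> P.2 < 6 -> Q.1.1 < 6 -> Q.2 < 6 ->
  local_walk_ok P -> local_walk_ok Q -> local_disjoint P Q -> local_parity P Q.
Proof.
have mem_local_walks R : R.1.1 < 6 -> R.2 < 6 -> local_walk_ok R -> R \in local_walks.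
  case: R => [[a T] a'] lt_a lt_a' okR; rewrite mem_filter okR.
  apply/flattenP; exists [seq (a, T', a'') | T' <- short_tri_seqs 3, a'' <- iota 0 6].
    by apply: (map_f (fun a => [seq (a, T', a'') | T' <- _, a'' <- _])); rewrite mem_iota.
  apply: (allpairs_f (fun T' a'' => (a, T', a''))); rewrite ?mem_iota //.
  exact/mem_short_tri_seqs/(local_walk_ok_size okR).
move=> ltP1 ltP2 ltQ1 ltQ2 okP okQ.
have /allP/(_ P (mem_local_walks P ltP1 ltP2 okP))/allP := local_parity_check.
by move/(_ Q (mem_local_walks Q ltQ1 ltQ2 okQ))/implyP.
Qed.

(* The labelings allowed at a 6-valent vertex: rotations and reflections of
   the positions 0..5. *)
Definition relabel (r : nat) (s : bool) (x : nat) : nat :=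
  if s then (r + x) %% 6 else (r + 6 - x) %% 6.

Lemma relabel_check :
  all (fun r => all (fun s => all (fun x1 => all (fun x2 =>
    ((relabel r s x1 == relabel r s x2) == (x1 == x2)) &&
    all (fun x3 => all (fun x4 =>
      alternating (relabel r s x1) (relabel r s x2) (relabel r s x3) (relabel r s x4) ==
      alternating x1 x2 x3 x4) (iota 0 6)) (iota 0 6)) (iota 0 6)) (iota 0 6))
    [:: true; false]) (iota 0 6).
Proof. by vm_compute. Qed.

Lemma relabel_spec r s x1 x2 x3 x4 : r < 6 -> x1 < 6 -> x2 < 6 -> x3 < 6 -> x4 < 6 ->
  ((relabel r s x1 == relabel r s x2) = (x1 == x2)) /\
  alternating (relabel r s x1) (relabel r s x2) (relabel r s x3) (relabel r s x4) =
  alternating x1 x2 x3 x4.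
Proof.
have all6 (f : pred nat) x : all f (iota 0 6) -> x < 6 -> f x.
  by move/allP/(_ x); rewrite mem_iota.
move=> lt_r lt1 lt2 lt3 lt4; have := all6 _ _ relabel_check lt_r => /allP/(_ s).
rewrite !inE; case: s => /(_ isT) check;
  have /andP[/eqP -> alt] := all6 _ _ (all6 _ _ check lt1) lt2;
  by split => //; apply/eqP; apply: (all6 _ _ (all6 _ _ alt lt3) lt4).
Qed.

Lemma relabel_lt6 r s x : relabel r s x < 6.
Proof. by case: s; apply: ltn_pmod. Qed.

(* Positions 2 and 3, those of the triangle half-edges, are adjacent. *)
Lemma alternating23l x y z w :
  (x == 2) || (x == 3) -> (z == 2) || (z == 3) -> alternating x y z w = false.
Proof.
have sb23 y' : strictly_between 2 3 y' = false /\ strictly_between 3 2 y' = false.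
  by rewrite /strictly_between /=; case: y' => [|[|[|]]].
move=> /orP[]/eqP-> /orP[]/eqP->;
  rewrite /alternating ?(sb23 y).1 ?(sb23 w).1 ?(sb23 y).2 ?(sb23 w).2 ?andbF //;
  by rewrite [uniq _]/= !inE eqxx /= ?orbT.
Qed.

Lemma alternating23r x y z w :
  (y == 2) || (y == 3) -> (w == 2) || (w == 3) -> alternating x y z w = false.
Proof.
have sb23 a c : a != 2 -> a != 3 -> c != 2 -> c != 3 ->
    strictly_between a c 2 = strictly_between a c 3.
  by rewrite /strictly_between => *; apply/idP/idP => /andP[h1 h2]; apply/andP; split; lia.
move=> Hy Hw; apply/negP => /andP[U N].
move: U; rewrite /= !inE !negb_or andbT => /and3P[/and3P[xy xz xw] /andP[yz yw] zw].
move: Hy Hw xy xw yz zw yw N => /orP[]/eqP-> /orP[]/eqP-> xy xw yz zw yw //.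
- by rewrite (sb23 _ _ xy xw _ zw) ?eqxx // eq_sym.
- by rewrite (sb23 _ _ xw xy zw _) ?eqxx // eq_sym.
Qed.

Section Expansion.
Variables (G : sgraph) (lab : sH G -> nat).
Local Notation G' := (expand lab).

Definition new_half := (V6 G * 'I_3 * bool)%type.
Definition old_half (x : exH G) : option (sH G) := if x is inl h then Some h else None.
Definition is_old (x : exH G) : bool := old_half x.

Lemma ex_vert_old6 h (E : deg (vert h) == 6) :
  ex_vert_old lab h = inr (exist _ (vert h) E, blk lab h).
Proof.
rewrite /ex_vert_old; move: (erefl (deg (vert h) == 6)).
case: {2 3}(deg (vert h) == 6) => e; first by rewrite (eq_irrelevance e E).
by exfalso; move: E; rewrite e.
Qed.

Lemma ex_vert_old4 h (E : deg (vert h) != 6) :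
  ex_vert_old lab h = inl (exist _ (vert h) E).
Proof.
rewrite /ex_vert_old; move: (erefl (deg (vert h) == 6)).
case: {2 3}(deg (vert h) == 6) => e; first by exfalso; move: E; rewrite e.
by congr inl; apply: val_inj.
Qed.

Definition base_of (u : exV G) : sV G := match u with inl w => val w | inr (w, _) => val w end.
Definition base_vertex (x : exH G) : sV G :=
  match x with inl h => vert h | inr (w, _, _) => val w end.

Lemma base_of_ex_vert x : base_of (ex_vert lab x) = base_vertex x.
Proof.
case: x => [h|[[w i] b]] //=.
by have [E|E] := boolP (deg (vert h) == 6); rewrite ?(ex_vert_old6 E) ?(ex_vert_old4 E).
Qed.

Lemma base_vertex_opp_new (t : new_half) : base_vertex (ex_opp (inr t)) = base_vertex (inr t).
Proof. by case: t => [[w i] []]. Qed.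

(* A piece (h, T, h') of a cycle of the expansion: the old edge h, the run T
   of triangle edges that follows it, and the next old edge h'. *)
Definition piece := (sH G * seq new_half * sH G)%type.

Fixpoint pieces (h : sH G) (T : seq new_half) (s : seq (exH G)) (z : sH G) : seq piece :=
  match s with
  | [::] => [:: (h, T, z)]
  | inl h' :: s' => (h, T, h') :: pieces h' [::] s' z
  | inr t :: s' => pieces h (rcons T t) s' z
  end.

Definition piece_passages (P : piece) : seq (sH G' * sH G') :=
  walk_passages (inl P.1.1 : sH G') (map inr P.1.2) (inl P.2).
Definition piece_passage (P : piece) : sH G * sH G := (opp P.1.1, P.2).

Lemma walk_passages_pieces h T s z :
  walk_passages (inl h : sH G') (map inr T ++ s) (inl z) =
  flatten (map piece_passages (pieces h T s z)).
Proof.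
elim: s h T => [|[h'|t] s IHs] h T /=.
- by rewrite cats0 /piece_passages /= cats0.
- by rewrite walk_passages_cat -(IHs h' [::]).
- by rewrite -(IHs h (rcons T t)) map_rcons cat_rcons.
Qed.

Lemma walk_passages_contract h T s z :
  walk_passages h (pmap old_half s) z = map piece_passage (pieces h T s z).
Proof. by elim: s h T => [|[h'|t] s IHs] h T //=; rewrite walk_passages_cons (IHs h' [::]). Qed.

Lemma mem_pieces h T s z P : P \in pieces h T s z ->
  [/\ P.1.1 = h \/ inl P.1.1 \in s, P.2 = z \/ inl P.2 \in s &
      forall t, t \in P.1.2 -> t \in T \/ inr t \in s].
Proof.
elim: s h T => [|[h'|t] s IHs] h T /=.
- by rewrite inE => /eqP -> /=; split; [left|left|left].
- rewrite inE => /orP[/eqP -> /= | /IHs [H1 H2 H3]].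
    by split; [left | right; rewrite mem_head | left].
  split.
  + by right; case: H1 => [->|H]; rewrite inE ?eqxx ?H ?orbT.
  + by case: H2 => [->|H]; [left|right; rewrite inE H orbT].
  + by move=> t /H3 [//|H]; right; rewrite inE H orbT.
- move=> /IHs [H1 H2 H3]; split.
  + by case: H1 => [->|H]; [left|right; rewrite inE].
  + by case: H2 => [->|H]; [left|right; rewrite inE].
  + move=> t' /H3 [|H]; last by right; rewrite inE H orbT.
    by rewrite mem_rcons inE => /orP[/eqP->|H]; [right; rewrite mem_head|left].
Qed.

Lemma pieces_uniq h T s z P :
  uniq (edge_halves (map inr T ++ s : seq (sH G'))) -> P \in pieces h T s z ->
  uniq (edge_halves (map inr P.1.2 : seq (sH G'))).
Proof.
elim: s h T => [|[h'|t] s IHs] h T /=.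
- by rewrite cats0 inE => U /eqP ->.
- move=> /edge_halves_cat_uniq/andP[U1 U2]; rewrite inE => /orP[/eqP -> // |].
  by apply: IHs; have /andP[] := edge_halves_cat_uniq (A := [:: inl h' : sH G']) U2.
- by rewrite -cat_rcons -map_rcons; apply: IHs.
Qed.

Lemma walk_passages_at (y : sH G') (T : seq new_half) (z : sH G') v :
  base_vertex (ex_opp y) = v ->
  all (fun p => vert p.1 == vert p.2) (walk_passages y (map inr T) z) ->
  [&& all (fun p => (base_vertex p.1 == v) && (base_vertex p.2 == v))
          (walk_passages y (map inr T) z),
      all (fun t => base_vertex (inr t) == v) T & base_vertex z == v].
Proof.
elim: T y => [|t T IHT] y yv.
- rewrite /walk_passages /= andbT => /eqP E.
  by rewrite yv -base_of_ex_vert -E base_of_ex_vert yv eqxx.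
- rewrite [map _ _]/= !walk_passages_cons; case: t => [[w i] b] /= /andP[E H].
  have wv : val w = v by rewrite -yv -[base_vertex (ex_opp y)]base_of_ex_vert (eqP E).
  have /and3P[-> -> ->] := IHT (inr (w, i, b)) (etrans (base_vertex_opp_new (w, i, b)) wv) H.
  by rewrite yv wv eqxx.
Qed.

Lemma walk_passages_new_at4 h T z : deg (vert (opp h)) != 6 ->
  all (fun p => vert p.1 == vert p.2) (walk_passages (inl h : sH G') (map inr T) z) ->
  T = [::].
Proof.
case: T => [//|[[w i] b] T] N.
by rewrite [map _ _]/= walk_passages_cons /= (ex_vert_old4 N).
Qed.

Definition piece_ok (P : piece) : bool :=
  all (fun p => vert p.1 == vert p.2) (piece_passages P) &&
  uniq (edge_halves (map inr P.1.2 : seq (sH G'))).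

Definition pieces_disjoint (P Q : piece) : bool :=
  ~~ has (mem (edge_halves (map inr Q.1.2 : seq (sH G')))) (map inr P.1.2) &&
  uniq [:: opp P.1.1; P.2; opp Q.1.1; Q.2].

Definition piece_crossings (P Q : piece) : nat :=
  \sum_(p <- piece_passages P) \sum_(q <- piece_passages Q) is_crossing p q.

Lemma piece_ok_at P : piece_ok P ->
  [&& all (fun p => (base_vertex p.1 == vert (opp P.1.1)) &&
                    (base_vertex p.2 == vert (opp P.1.1))) (piece_passages P),
      all (fun t => base_vertex (inr t) == vert (opp P.1.1)) P.1.2 &
      vert P.2 == vert (opp P.1.1)].
Proof. by case/andP=> onP _; apply: walk_passages_at. Qed.

Lemma crossings_new_only (A B : seq (sH G')) :
  ~~ has is_old A \/ ~~ has is_old B -> crossings A B = 0.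
Proof.
have new_passage (C : seq (sH G')) (r : sH G' * sH G') : ~~ has is_old C -> r \in passages C ->
    ((ex_xpos lab r.1 == 2) || (ex_xpos lab r.1 == 3)) &&
    ((ex_xpos lab r.2 == 2) || (ex_xpos lab r.2 == 3)).
  move=> /hasPn newC /mem_passages/andP[/mapP[x xC ->] r2C].
  move: (newC x xC) (newC _ r2C); case: x {xC} => [//|[[w i] []]] _;
  by case: r.2 => [//|[[? ?] []]].
move=> newAB; rewrite crossingsE big1_seq // => p /andP[_ pA].
rewrite big1_seq // => q /andP[_ qB].
apply/eqP; rewrite eqb0 negb_and; apply/orP; right; apply/negbT.
case: newAB => [/new_passage/(_ pA) | /new_passage/(_ qB)] /andP[pos1 pos2].
- exact: alternating23l.
- exact: alternating23r.
Qed.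

Definition contract (h0 : sH G) (s : seq (sH G')) : seq (sH G) := h0 :: pmap old_half s.

Lemma old_halfK : ocancel old_half inl.
Proof. by case. Qed.

Lemma contract_subseq h0 s :
  subseq (map inl (edge_halves (contract h0 s))) (edge_halves (inl h0 :: s : seq (sH G'))).
Proof.
have sub : subseq (map inl (contract h0 s)) (inl h0 :: s).
  by rewrite /= (pmap_filter old_halfK) eqxx filter_subseq.
rewrite /edge_halves map_cat cat_subseq // -map_comp.
by rewrite (eq_map (_ : inl \o @opp G =1 @ex_opp G \o inl)) // map_comp map_subseq.
Qed.

Lemma mem_contract h0 s x : x = h0 \/ inl x \in s -> x \in contract h0 s.
Proof. by case=> [->|xs]; rewrite ?mem_head // inE mem_pmap (map_f old_half xs) orbT. Qed.

Lemma passages_pieces h0 s :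
  passages (inl h0 :: s : seq (sH G')) = flatten (map piece_passages (pieces h0 [::] s h0)).
Proof. by rewrite passages_cons; apply: (walk_passages_pieces h0 [::]). Qed.

Lemma passages_contract h0 s :
  passages (contract h0 s) = map piece_passage (pieces h0 [::] s h0).
Proof. by rewrite passages_cons; apply: walk_passages_contract. Qed.

Section Cycle.
Variables (h0 : sH G) (s : seq (sH G')).
Hypothesis cycle_s : is_cycle (inl h0 :: s : seq (sH G')).

Lemma pieces_ok P : P \in pieces h0 [::] s h0 -> piece_ok P.
Proof.
case/and3P: cycle_s => _ uniq_s; rewrite cycle_passages passages_pieces.
move=> /allP vert_s PP; apply/andP; split.
  apply/allP => p pP; apply: vert_s; apply/flattenP.
  by exists (piece_passages P); rewrite ?map_f.
apply: (pieces_uniq (h := h0) (z := h0) _ PP).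
by have /andP[] := edge_halves_cat_uniq (A := [:: inl h0 : sH G']) uniq_s.
Qed.

Lemma piece_ends_contract P : P \in pieces h0 [::] s h0 ->
  (P.1.1 \in contract h0 s) && (P.2 \in contract h0 s).
Proof. by case/mem_pieces=> P1 P2 _; rewrite !mem_contract. Qed.

Lemma piece_new_halves P : P \in pieces h0 [::] s h0 ->
  {subset edge_halves (map inr P.1.2 : seq (sH G')) <= edge_halves (inl h0 :: s : seq (sH G'))}.
Proof.
case/mem_pieces=> _ _ newP x; rewrite /edge_halves !mem_cat.
case/orP=> [/mapP[t /newP[//|ts] ->] | /mapP[y /mapP[t /newP[//|ts] ->] ->]].
- by rewrite inE ts orbT.
- by rewrite (map_f (@opp G')) ?orbT // inE ts orbT.
Qed.

Lemma is_cycle_contract : is_cycle (contract h0 s).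
Proof.
case/and3P: cycle_s => _ uniq_s _; apply/and3P; split => //.
  rewrite -(map_inj_uniq (@inl_inj (sH G) new_half)).
  exact: (subseq_uniq (contract_subseq h0 s) uniq_s).
rewrite cycle_passages passages_contract all_map; apply/allP => P PP /=.
by have /and3P[_ _ /eqP ->] := piece_ok_at (pieces_ok PP).
Qed.

End Cycle.

Hypothesis wf : wf_star_graph G.
Hypothesis lab_ok : expansion_labeling lab.

Lemma lab_relabel v : deg v = 6 -> exists r s, r < 6 /\
  forall h, vert h = v -> lab h = relabel r s (xpos h) /\ xpos h < 6.
Proof.
move=> Dv; have [r [s labE]] := lab_ok Dv.
exists (r %% 6), s; split=> [|h hv]; first exact: ltn_pmod.
have lt_x : xpos h < 6 by rewrite -Dv -hv; case: wf => _ [].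
split=> //; rewrite labE // /relabel; case: s {labE}.
- by rewrite modnDml.
- by rewrite -!addnBA ?modnDml // ltnW.
Qed.

Lemma lab_lt6 v h : deg v = 6 -> vert h = v -> lab h < 6.
Proof.
by move=> Dv hv; have [r [s [_ labE]]] := lab_relabel Dv; rewrite (labE h hv).1 relabel_lt6.
Qed.

Definition to_local (x : exH G) : local_half :=
  match x with inl h => inl (lab h) | inr (_, i, b) => inr (i, b) end.

Section SixValent.
Variables (v : sV G) (v6 : deg v == 6).

Lemma ex_vert_at6 x : base_vertex x = v ->
  ex_vert lab x = inr (exist _ v v6, inord (local_block (to_local x))) /\
  local_block (to_local x) < 3.
Proof.
case: x => [h|[[w i] b]] /= xv.
- have h6 : deg (vert h) == 6 by rewrite xv.
  rewrite (ex_vert_old6 h6); split; last by rewrite ltn_divLR // (lab_lt6 (eqP v6) xv).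
  by congr (inr (_, _)); apply: val_inj; rewrite /= xv.
- split => //; congr (inr (_, _)); [exact: val_inj | by rewrite inord_val].
Qed.

Lemma ex_vert_eq_at6 x y : base_vertex x = v -> base_vertex y = v ->
  (ex_vert lab x == ex_vert lab y) = (local_block (to_local x) == local_block (to_local y)).
Proof.
move=> xv yv; have [-> ltx] := ex_vert_at6 xv; have [-> lty] := ex_vert_at6 yv.
by rewrite -[_ == _]/((_, _) == (_, _)) xpair_eqE eqxx /= -val_eqE /= !inordK.
Qed.

Lemma ex_xpos_at6 x : base_vertex x = v -> ex_xpos lab x = local_xpos (to_local x).
Proof. by case: x => [h|[[w i] b]] /= xv; rewrite ?xv ?v6. Qed.

Lemma to_local_inj_at6 x y : base_vertex x = v -> base_vertex y = v ->
  to_local x = to_local y -> x = y.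
Proof.
case: x => [h|[[w i] b]]; case: y => [h'|[[w' i'] b']] //= xv yv.
- move=> [] eq_lab; have [r [s [lt_r labE]]] := lab_relabel (eqP v6).
  have [lh lt_h] := labE h xv; have [lh' lt_h'] := labE h' yv.
  have eq_xpos : xpos h = xpos h'.
    apply/eqP; rewrite -(relabel_spec s lt_r lt_h lt_h' (isT : 0 < 6) (isT : 0 < 6)).1.
    by rewrite -lh -lh' eq_lab.
  by case: wf => _ [_ xpos_inj]; congr inl; apply: xpos_inj; rewrite // xv yv.
- by move=> [] -> ->; have -> : w = w' by apply: val_inj; rewrite /= xv yv.
Qed.

Definition new_to_tri (t : new_half) : tri_half := (t.1.2, t.2).
Definition local_walk_of (P : piece) : local_walk :=
  (lab (opp P.1.1), map new_to_tri P.1.2, lab P.2).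

Lemma to_local_walk_passages (y : sH G') T (z : sH G') :
  map (fun p => (to_local p.1, to_local p.2)) (walk_passages y (map inr T) z) =
  zip (to_local (ex_opp y) :: map (inr \o tri_opp \o new_to_tri) T)
      (map (inr \o new_to_tri) T ++ [:: to_local z]).
Proof.
elim: T y => [|t T IHT] y //.
by rewrite [map inr _]/= walk_passages_cons /= IHT; case: t => [[w i] []].
Qed.

Lemma to_local_piece_passages P :
  map (fun p => (to_local p.1, to_local p.2)) (piece_passages P) =
  local_passages (lab (opp P.1.1)) (map new_to_tri P.1.2) (lab P.2).
Proof. by rewrite to_local_walk_passages /local_passages -!map_comp. Qed.

Lemma edge_halves_new_at (T : seq new_half) : all (fun t => base_vertex (inr t) == v) T ->
  forall x, x \in edge_halves (map inr T : seq (sH G')) -> base_vertex x = v.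
Proof.
move=> /allP Tv x; rewrite /edge_halves mem_cat => /orP[] /mapP [y yT ->].
- exact/eqP/Tv.
- by case/mapP: yT => t tT ->; rewrite base_vertex_opp_new; apply/eqP/Tv.
Qed.

Lemma to_local_edge_halves (T : seq new_half) :
  map to_local (edge_halves (map inr T : seq (sH G'))) =
  map inr (map new_to_tri T ++ map tri_opp (map new_to_tri T)).
Proof.
rewrite /edge_halves !map_cat -!map_comp; congr (_ ++ _); apply: eq_map.
- by case=> [[w i] b].
- by case=> [[w i] []].
Qed.

Lemma local_walk_of_ok P : piece_ok P -> vert (opp P.1.1) = v ->
  local_walk_ok (local_walk_of P).
Proof.
move=> okP Pv.
have /and3P[onP Tv _] := piece_ok_at okP; rewrite Pv in onP Tv.
case/andP: okP => vertP uniqP.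
rewrite /local_walk_of /local_walk_ok -to_local_piece_passages all_map; apply/andP; split.
- apply/allP => p pP /=; have /andP[/eqP p1v /eqP p2v] := allP onP p pP.
  by rewrite -(ex_vert_eq_at6 p1v p2v); exact: (allP vertP p pP).
- rewrite -(map_inj_uniq (@inr_inj nat tri_half)) -to_local_edge_halves.
  rewrite map_inj_in_uniq // => x y xT yT; apply: to_local_inj_at6;
  exact: (edge_halves_new_at Tv).
Qed.

Section Pieces.
Variables P Q : piece.
Hypotheses (okP : piece_ok P) (okQ : piece_ok Q).
Hypotheses (Pv : vert (opp P.1.1) = v) (Qv : vert (opp Q.1.1) = v).

Lemma piece_crossings_local :
  piece_crossings P Q = local_crossings (local_walk_of P) (local_walk_of Q).
Proof.
have /and3P[onP _ _] := piece_ok_at okP; have /and3P[onQ _ _] := piece_ok_at okQ.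
rewrite Pv in onP; rewrite Qv in onQ.
rewrite /local_crossings /= -sumn_count sumnE big_map big_allpairs.
rewrite -to_local_piece_passages -to_local_piece_passages big_map.
apply: eq_big_seq => p pP; rewrite big_map; apply: eq_big_seq => q qQ /=.
have /andP[/eqP p1v /eqP p2v] := allP onP p pP; have /andP[/eqP q1v /eqP q2v] := allP onQ q qQ.
by rewrite /is_crossing /= (ex_vert_eq_at6 p1v q1v) !ex_xpos_at6.
Qed.

Lemma local_disjoint_of :
  pieces_disjoint P Q -> local_disjoint (local_walk_of P) (local_walk_of Q).
Proof.
have /and3P[_ TPv /eqP P2v] := piece_ok_at okP; have /and3P[_ TQv /eqP Q2v] := piece_ok_at okQ.
rewrite Pv in TPv P2v; rewrite Qv in TQv Q2v.
case/andP=> disjT uniq_old; apply/andP; split.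
- have old_v : all (fun h => vert h == v) [:: opp P.1.1; P.2; opp Q.1.1; Q.2].
    by rewrite /= Pv P2v Qv Q2v eqxx.
  change (uniq (map lab [:: opp P.1.1; P.2; opp Q.1.1; Q.2])).
  rewrite map_inj_in_uniq // => x y xI yI eq_lab.
  suff : inl x = inl y :> exH G by case.
  by apply: to_local_inj_at6; rewrite /= ?eq_lab //; apply/eqP/(allP old_v).
- apply/hasP => -[_ /mapP [t tP ->] tQ].
  have : inr (new_to_tri t) \in map to_local (edge_halves (map inr Q.1.2 : seq (sH G'))).
    by rewrite to_local_edge_halves map_f.
  case/mapP => y yQ eq_t; move/negP: disjT; apply; apply/hasP; exists (inr t); first exact: map_f.
  suff -> : inr t = y by [].
  apply: to_local_inj_at6; [exact/eqP/(allP TPv) | exact: (edge_halves_new_at TQv) |].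
  by rewrite -eq_t; case: (t) => [[]].
Qed.

Lemma is_crossing_piece_passage6 :
  is_crossing (piece_passage P) (piece_passage Q) =
  alternating (lab (opp P.1.1)) (lab (opp Q.1.1)) (lab P.2) (lab Q.2).
Proof.
have /and3P[_ _ /eqP P2v] := piece_ok_at okP; have /and3P[_ _ /eqP Q2v] := piece_ok_at okQ.
rewrite Pv in P2v; rewrite Qv in Q2v.
have [r [s [lt_r labE]]] := lab_relabel (eqP v6).
have [l1 x1] := labE _ Pv; have [l2 x2] := labE _ P2v.
have [l3 x3] := labE _ Qv; have [l4 x4] := labE _ Q2v.
by rewrite /is_crossing /= Pv Qv eqxx l1 l2 l3 l4 (relabel_spec s lt_r x1 x3 x2 x4).2.
Qed.

Lemma piece_crossings_parity6 : pieces_disjoint P Q ->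
  even_excess (is_crossing (piece_passage P) (piece_passage Q)) (piece_crossings P Q).
Proof.
move=> disjPQ; have /and3P[_ _ /eqP P2v] := piece_ok_at okP.
have /and3P[_ _ /eqP Q2v] := piece_ok_at okQ; rewrite Pv in P2v; rewrite Qv in Q2v.
have lt6 h : vert h = v -> lab h < 6 by apply: lab_lt6; apply/eqP.
rewrite is_crossing_piece_passage6 piece_crossings_local.
exact: (@local_parityP (local_walk_of P) (local_walk_of Q)
          (lt6 _ Pv) (lt6 _ P2v) (lt6 _ Qv) (lt6 _ Q2v)
          (local_walk_of_ok okP Pv) (local_walk_of_ok okQ Qv) (local_disjoint_of disjPQ)).
Qed.

End Pieces.

End SixValent.

Lemma piece_crossings_parity P Q : piece_ok P -> piece_ok Q -> pieces_disjoint P Q ->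
  even_excess (is_crossing (piece_passage P) (piece_passage Q)) (piece_crossings P Q).
Proof.
move=> okP okQ disjPQ.
have /and3P[onP _ /eqP P2v] := piece_ok_at okP; have /and3P[onQ _ /eqP Q2v] := piece_ok_at okQ.
have [vPQ|nvPQ] := eqVneq (vert (opp P.1.1)) (vert (opp Q.1.1)); last first.
  rewrite /is_crossing /= (negbTE nvPQ) /piece_crossings big1_seq // => p pP.
  rewrite big1_seq // => q qQ; apply/eqP; rewrite eqb0 negb_and; apply/orP; left.
  have /andP[/eqP p1v _] := allP onP p pP; have /andP[/eqP q1v _] := allP onQ q qQ.
  by apply: contra nvPQ => /eqP/(congr1 base_of); rewrite !base_of_ex_vert p1v q1v => ->.
have [v6|v4] := boolP (deg (vert (opp P.1.1)) == 6).
  exact: (piece_crossings_parity6 v6 okP okQ erefl (esym vPQ) disjPQ).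
case: P Q okP okQ onP onQ P2v Q2v vPQ v4 {disjPQ} => [[hP TP] hP'] [[hQ TQ] hQ'] /=.
case/andP=> vertP _; case/andP=> vertQ _ _ _ P2v Q2v vPQ P4.
have Q4 : deg (vert (opp hQ)) != 6 by rewrite -vPQ.
have -> : TP = [::] := walk_passages_new_at4 P4 vertP.
have -> : TQ = [::] := walk_passages_new_at4 Q4 vertQ.
rewrite /piece_crossings /piece_passages /walk_passages /= !big_seq1 /is_crossing /=.
rewrite !ex_vert_old4 ?P2v ?Q2v -?vPQ //= (negbTE P4) (negbTE Q4).
have -> : (inl (exist (fun w => deg w != 6) _ P4) ==
           inl (exist (fun w => deg w != 6) _ Q4) :> exV G) =
          (vert (opp hP) == vert (opp hQ)) by [].
by rewrite /even_excess subnn leqnn.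
Qed.

Section Obstruct.
Variables (h0 h1 : sH G) (s t : seq (sH G')).
Hypotheses (cycle_s : is_cycle (inl h0 :: s : seq (sH G')))
           (cycle_t : is_cycle (inl h1 :: t : seq (sH G'))).
Hypothesis disj_st : edge_disjoint (inl h0 :: s : seq (sH G')) (inl h1 :: t).

Lemma edge_disjoint_contract : edge_disjoint (contract h0 s) (contract h1 t).
Proof.
apply/negP => /hasP[x xs xt]; move/negP: disj_st; apply; apply/hasP; exists (inl x).
- exact: (mem_subseq (contract_subseq h0 s) (map_f inl xs)).
- exact: (mem_subseq (contract_subseq h1 t) (map_f inl xt)).
Qed.

Lemma pieces_disjoint_contract P Q :
  P \in pieces h0 [::] s h0 -> Q \in pieces h1 [::] t h1 -> pieces_disjoint P Q.
Proof.
move=> PP QQ; apply/andP; split.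
  apply/negP => /hasP[x xP xQ].
  have xP' : x \in edge_halves (map inr P.1.2 : seq (sH G')) by rewrite mem_cat xP.
  have := edge_disjoint_neq disj_st (piece_new_halves PP xP') (piece_new_halves QQ xQ).
  by rewrite eqxx.
have /and3P[_ uniq_s _] := is_cycle_contract cycle_s.
have /and3P[_ uniq_t _] := is_cycle_contract cycle_t.
have /andP[P1 P2] := piece_ends_contract PP; have /andP[Q1 Q2] := piece_ends_contract QQ.
have halves (x : sH G) (A : seq (sH G)) :
    x \in A -> (x \in edge_halves A) && (opp x \in edge_halves A).
  by move=> xA; rewrite !mem_cat xA map_f ?orbT.
have /andP[hP1 oP1] := halves _ _ P1; have /andP[hP2 _] := halves _ _ P2.
have /andP[hQ1 oQ1] := halves _ _ Q1; have /andP[hQ2 _] := halves _ _ Q2.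
have neq := edge_disjoint_neq edge_disjoint_contract.
rewrite /= !inE !negb_or (edge_halves_opp_neq uniq_s P1 P2).
by rewrite (edge_halves_opp_neq uniq_t Q1 Q2) !neq.
Qed.

Lemma crossings_contract :
  even_excess (crossings (contract h0 s) (contract h1 t))
              (crossings (inl h0 :: s : seq (sH G')) (inl h1 :: t)).
Proof.
rewrite !crossingsE passages_pieces passages_contract passages_pieces passages_contract.
rewrite big_map big_flatten big_map; apply: even_excess_sum => P PP.
have split_t p : \sum_(q <- flatten (map piece_passages (pieces h1 [::] t h1))) is_crossing p q =
    \sum_(Q <- pieces h1 [::] t h1) \sum_(q <- piece_passages Q) is_crossing p q.
  by rewrite big_flatten big_map.
rewrite big_map (eq_bigr _ (fun p _ => split_t p)) exchange_big.
apply: even_excess_sum => Q QQ.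
apply: piece_crossings_parity; [exact: pieces_ok PP | exact: pieces_ok QQ |].
exact: pieces_disjoint_contract.
Qed.

End Obstruct.

Lemma vassiliev_obstruct_contract h0 s h1 t :
  vassiliev_obstruct (inl h0 :: s : seq (sH G')) (inl h1 :: t) ->
  vassiliev_obstruct (contract h0 s) (contract h1 t).
Proof.
case=> cycle_s cycle_t disj_st cross_st; split.
- exact: is_cycle_contract.
- exact: is_cycle_contract.
- exact: edge_disjoint_contract.
- by apply: even_excess1; rewrite -cross_st; apply: crossings_contract.
Qed.

End Expansion.

Theorem lemma3p2 (G : sgraph) (lab : sH G -> nat) :
  wf_star_graph G ->
  (forall v : sV G, deg v = 4 \/ deg v = 6) ->
  expansion_labeling lab ->
  has_vassiliev_obstruct (expand lab) ->
  has_vassiliev_obstruct G.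
Proof.
move=> wf _ lab_ok [A [B obAB]].
have [_ _ _ cross_AB] := obAB.
have /hasP[[h0 A_h0 _|//]] : has (@is_old G) A.
  by apply/negPn/negP => no_old; move: cross_AB; rewrite crossings_new_only //; left.
have /hasP[[h1 B_h1 _|//]] : has (@is_old G) B.
  by apply/negPn/negP => no_old; move: cross_AB; rewrite crossings_new_only //; right.
have := vassiliev_obstruct_rot (index (inl h0) A) (index (inl h1) B) obAB.
rewrite (rot_index A_h0) (rot_index B_h1) => /(vassiliev_obstruct_contract wf lab_ok) ob.
by do 2!eexists; exact: ob.
Qed.
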